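(* Any homomorphism between special 2-groups is isomorphic, in the 2-category $\mathrm{C2G}$, to a special homomorphism.
   Context: A coherent 2-group is a weak monoidal category in which all morphisms are invertible and each object $x$ is equipped with an adjoint equivalence $(x,\bar x,i_x,e_x)$ ($i_x\colon 1\to x\otimes\bar x$, $e_x\colon\bar x\otimes x\to 1$ isomorphisms satisfying the zig-zag identities). A special 2-group is a coherent 2-group whose underlying category is skeletal (isomorphic objects are equal) and whose left unitor, right unitor, units $i$ and counits $e$ are identity natural transformations. A homomorphism of coherent 2-groups is a weak monoidal functor $F$ (structure maps $F_2\colon F(x)\otimes F(y)\to F(x\otimes y)$, $F_0\colon 1'\to F(1)$); it is special if it goes between special 2-groups and $F_0$ is an identity morphism. $\mathrm{C2G}$ is the strict 2-category of coherent 2-groups, weak monoidal functors and monoidal natural transformations; ''isomorphic'' means related by an invertible monoidal natural transformation. *)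

Record TwoGroup := {
  ob : Type;
  hom : ob -> ob -> Type;
  idm : forall {a}, hom a a;
  comp : forall {a b c}, hom b c -> hom a b -> hom a c;
  inv : forall {a b}, hom a b -> hom b a;
  comp_assoc : forall a b c d (h : hom c d) (g : hom b c) (f : hom a b),
      comp h (comp g f) = comp (comp h g) f;
  comp_id_l : forall a b (f : hom a b), comp idm f = f;
  comp_id_r : forall a b (f : hom a b), comp f idm = f;
  inv_l : forall a b (f : hom a b), comp (inv f) f = idm;
  inv_r : forall a b (f : hom a b), comp f (inv f) = idm;
  tens : ob -> ob -> ob;
  tensm : forall {a b c d}, hom a b -> hom c d -> hom (tens a c) (tens b d);
  tens_id : forall a c, tensm (@idm a) (@idm c) = idm;
  tens_comp : forall a b e c d k (f : hom a b) (g : hom b e) (h : hom c d) (l : hom d k),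
      tensm (comp g f) (comp l h) = comp (tensm g l) (tensm f h);
  I : ob;
  assoc : forall x y z, hom (tens (tens x y) z) (tens x (tens y z));
  assoc_nat : forall x x' y y' z z' (f : hom x x') (g : hom y y') (h : hom z z'),
      comp (assoc x' y' z') (tensm (tensm f g) h) = comp (tensm f (tensm g h)) (assoc x y z);
  lunit : forall x, hom (tens I x) x;
  lunit_nat : forall x x' (f : hom x x'), comp (lunit x') (tensm (@idm I) f) = comp f (lunit x);
  runit : forall x, hom (tens x I) x;
  runit_nat : forall x x' (f : hom x x'), comp (runit x') (tensm f (@idm I)) = comp f (runit x);
  pentagon : forall w x y z,
      comp (assoc w x (tens y z)) (assoc (tens w x) y z)
      = comp (tensm idm (assoc x y z)) (comp (assoc w (tens x y) z) (tensm (assoc w x y) idm));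
  triangle : forall x y, comp (tensm idm (lunit y)) (assoc x I y) = tensm (runit x) idm;
  dual : ob -> ob;
  coev : forall x, hom I (tens x (dual x));
  ev : forall x, hom (tens (dual x) x) I;
  zigzag1 : forall x,
      comp (runit x) (comp (tensm idm (ev x)) (comp (assoc x (dual x) x)
        (comp (tensm (coev x) idm) (inv (lunit x))))) = idm;
  zigzag2 : forall x,
      comp (lunit (dual x)) (comp (tensm (ev x) idm) (comp (inv (assoc (dual x) x (dual x)))
        (comp (tensm idm (coev x)) (inv (runit (dual x)))))) = idm
}.

Arguments idm {t a}.
Arguments comp {t a b c}.
Arguments inv {t a b}.
Arguments tens {t}.
Arguments tensm {t a b c d}.
Arguments I {t}.
Arguments assoc {t}.
Arguments lunit {t}.
Arguments runit {t}.
Arguments dual {t}.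
Arguments coev {t}.
Arguments ev {t}.

Definition eq_hom {G : TwoGroup} {a b : ob G} (p : a = b) : hom G a b :=
  match p in _ = b' return hom G a b' with eq_refl => idm end.

Definition is_identity {G : TwoGroup} {a b : ob G} (f : hom G a b) : Prop :=
  exists p : a = b, f = eq_hom p.

Definition special (G : TwoGroup) : Prop :=
  (forall (x y : ob G) (f : hom G x y), x = y) /\
  (forall x : ob G, is_identity (lunit x)) /\
  (forall x : ob G, is_identity (runit x)) /\
  (forall x : ob G, is_identity (coev x)) /\
  (forall x : ob G, is_identity (ev x)).

(* Homomorphism of coherent 2-groups = weak monoidal functor. *)
Record Hom2 (G H : TwoGroup) := {
  fob : ob G -> ob H;
  fmor : forall {a b}, hom G a b -> hom H (fob a) (fob b);
  fmor_id : forall a, fmor (@idm G a) = idm;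
  fmor_comp : forall a b c (g : hom G b c) (f : hom G a b), fmor (comp g f) = comp (fmor g) (fmor f);
  F2 : forall x y, hom H (tens (fob x) (fob y)) (fob (tens x y));
  F2_nat : forall x x' y y' (f : hom G x x') (g : hom G y y'),
      comp (F2 x' y') (tensm (fmor f) (fmor g)) = comp (fmor (tensm f g)) (F2 x y);
  F0 : hom H I (fob I);
  F_assoc : forall x y z,
      comp (fmor (assoc x y z)) (comp (F2 (tens x y) z) (tensm (F2 x y) idm))
      = comp (F2 x (tens y z)) (comp (tensm idm (F2 y z)) (assoc (fob x) (fob y) (fob z)));
  F_lunit : forall x,
      comp (fmor (lunit x)) (comp (F2 I x) (tensm F0 idm)) = lunit (fob x);
  F_runit : forall x,
      comp (fmor (runit x)) (comp (F2 x I) (tensm idm F0)) = runit (fob x)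
}.

Arguments fob {G H}.
Arguments fmor {G H} _ {a b}.
Arguments F2 {G H}.
Arguments F0 {G H}.

Record MonNat {G H : TwoGroup} (F F' : Hom2 G H) := {
  theta : forall x, hom H (fob F x) (fob F' x);
  theta_nat : forall x y (f : hom G x y), comp (theta y) (fmor F f) = comp (fmor F' f) (theta x);
  theta_tens : forall x y,
      comp (theta (tens x y)) (F2 F x y) = comp (F2 F' x y) (tensm (theta x) (theta y));
  theta_unit : comp (theta I) (F0 F) = F0 F'
}.

Arguments theta {G H F F'}.

Definition iso_hom {G H : TwoGroup} (F F' : Hom2 G H) : Prop :=
  exists (t : MonNat F F') (u : MonNat F' F),
    forall x, comp (theta u x) (theta t x) = idm /\ comp (theta t x) (theta u x) = idm.

Definition special_hom {G H : TwoGroup} (F : Hom2 G H) : Prop :=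
  special G /\ special H /\ is_identity (F0 F).

(* Within its isomorphism class, the unit constraint F0 : I -> F I of a
   monoidal functor can be changed at will.  Conjugating by a natural
   automorphism th of the underlying functor, F2' = th o F2 o (th^-1 (x) th^-1)
   and F0' = th_I o F0, gives a monoidal functor to which th is a monoidal
   isomorphism.  Every u : I -> F I yields such an automorphism,
   th_x = F(rho_x) o F2(x, I) o (1 (x) u) o rho^-1, and when rho_I = lambda_I
   it sends F0 to u.  In a special target, I = F I by skeletality and
   rho_I = lambda_I as both are identities, so u can be taken to be the
   identity. *)

From Stdlib Require Import ProofIrrelevance.

Arguments comp_assoc {t a b c d}.
Arguments comp_id_l {t a b}.
Arguments comp_id_r {t a b}.
Arguments inv_l {t a b}.
Arguments inv_r {t a b}.
Arguments tens_id {t}.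
Arguments tens_comp {t a b e c d k}.
Arguments assoc_nat {t x x' y y' z z'}.
Arguments lunit_nat {t x x'}.
Arguments runit_nat {t x x'}.
Arguments fmor_id {G H} h a.
Arguments F2_nat {G H} h {x x' y y'}.
Arguments F_assoc {G H} h.
Arguments F_lunit {G H} h.
Arguments F_runit {G H} h.

Section MorphismCalculus.
Context {C : TwoGroup}.

Lemma comp_chain2 {a b c d} (g : hom C b c) (f : hom C a b) (k : hom C a c) :
  comp g f = k -> forall h : hom C d a, comp g (comp f h) = comp k h.
Proof. intros E h. rewrite comp_assoc, E. reflexivity. Qed.

Lemma comp_chain3 {a b c d e} (g : hom C b c) (f : hom C a b) (f0 : hom C e a)
  (k : hom C e c) :
  comp g (comp f f0) = k -> forall h : hom C d e, comp g (comp f (comp f0 h)) = comp k h.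
Proof. intros E h. rewrite <- E, !comp_assoc. reflexivity. Qed.

Lemma inv_l_chain {a b c} (f : hom C a b) (h : hom C c a) : comp (inv f) (comp f h) = h.
Proof. rewrite comp_assoc, inv_l, comp_id_l. reflexivity. Qed.

Lemma inv_r_chain {a b c} (f : hom C a b) (h : hom C c b) : comp f (comp (inv f) h) = h.
Proof. rewrite comp_assoc, inv_r, comp_id_l. reflexivity. Qed.

Lemma inv_square {a b c d} (h : hom C b d) (f : hom C a b) (g : hom C c d) (k : hom C a c) :
  comp h f = comp g k -> comp (inv g) h = comp k (inv f).
Proof.
  intros E.
  rewrite <- (comp_id_r (comp (inv g) h)), <- (inv_r f), <- !comp_assoc.
  rewrite (comp_chain2 _ _ _ E), <- comp_assoc, inv_l_chain. reflexivity.
Qed.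

Lemma comp_tensm {a b e c d k} (f : hom C a b) (g : hom C b e) (h : hom C c d)
  (l : hom C d k) :
  comp (tensm g l) (tensm f h) = tensm (comp g f) (comp l h).
Proof. symmetry. apply tens_comp. Qed.

Lemma tensm_comp_l {a b e c d} (f : hom C a b) (g : hom C b e) (h : hom C c d) :
  tensm (comp g f) h = comp (tensm g idm) (tensm f h).
Proof. rewrite <- tens_comp, comp_id_l. reflexivity. Qed.

Lemma tensm_comp_r {a b e c d} (f : hom C a b) (g : hom C b e) (h : hom C c d) :
  tensm h (comp g f) = comp (tensm idm g) (tensm h f).
Proof. rewrite <- tens_comp, comp_id_l. reflexivity. Qed.

Lemma tensm_split_l {a b c d} (f : hom C a b) (g : hom C c d) :
  tensm f g = comp (tensm f idm) (tensm idm g).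
Proof. rewrite <- tens_comp, comp_id_l, comp_id_r. reflexivity. Qed.

Lemma tensm_split_r {a b c d} (f : hom C a b) (g : hom C c d) :
  tensm f g = comp (tensm idm g) (tensm f idm).
Proof. rewrite <- tens_comp, comp_id_l, comp_id_r. reflexivity. Qed.

Lemma inv_runit_nat {a b} (f : hom C a b) :
  comp (inv (runit b)) f = comp (tensm f idm) (inv (runit a)).
Proof. apply inv_square. symmetry. apply runit_nat. Qed.

End MorphismCalculus.

(* Composites are kept right-associated; [rewrite_chain E] rewrites with an
   equation [E] whose left side is a composite of two or three morphisms
   occurring anywhere along such a chain. *)
Tactic Notation "rewrite_chain" open_constr(E) :=
  first [ rewrite (comp_chain2 _ _ _ E)
        | rewrite (comp_chain3 _ _ _ _ E)
        | rewrite E ];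
  rewrite <- ?comp_assoc.

Section Conjugation.
Context {G H : TwoGroup}.
Variable F : Hom2 G H.
Variable th : forall x, hom H (fob F x) (fob F x).
Hypothesis th_nat : forall x y (f : hom G x y),
  comp (th y) (fmor F f) = comp (fmor F f) (th x).

Lemma inv_th_nat x y (f : hom G x y) :
  comp (inv (th y)) (fmor F f) = comp (fmor F f) (inv (th x)).
Proof. apply inv_square. symmetry. apply th_nat. Qed.

Definition conj_F2 x y : hom H (tens (fob F x) (fob F y)) (fob F (tens x y)) :=
  comp (th (tens x y)) (comp (F2 F x y) (tensm (inv (th x)) (inv (th y)))).

Lemma conj_F2_nat x x' y y' (f : hom G x x') (g : hom G y y') :
  comp (conj_F2 x' y') (tensm (fmor F f) (fmor F g))
  = comp (fmor F (tensm f g)) (conj_F2 x y).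
Proof.
  unfold conj_F2. rewrite <- !comp_assoc, <- tens_comp, !inv_th_nat, tens_comp.
  rewrite_chain (F2_nat F f g). rewrite_chain (th_nat _ _ _). reflexivity.
Qed.

Lemma conj_F_assoc x y z :
  comp (fmor F (assoc x y z)) (comp (conj_F2 (tens x y) z) (tensm (conj_F2 x y) idm))
  = comp (conj_F2 x (tens y z))
      (comp (tensm idm (conj_F2 y z)) (assoc (fob F x) (fob F y) (fob F z))).
Proof.
  unfold conj_F2. rewrite <- !comp_assoc.
  rewrite_chain (eq_sym (th_nat _ _ _)).
  rewrite_chain (comp_tensm _ _ _ _). rewrite_chain (comp_tensm _ _ _ _).
  rewrite !inv_l_chain, !comp_id_r, tensm_comp_l, tensm_comp_r, <- !comp_assoc.
  rewrite_chain (F_assoc F x y z). rewrite_chain (assoc_nat _ _ _). reflexivity.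
  Qed.

Lemma conj_F_lunit x :
  comp (fmor F (lunit x)) (comp (conj_F2 I x) (tensm (comp (th I) (F0 F)) idm))
  = lunit (fob F x).
Proof.
  unfold conj_F2. rewrite <- !comp_assoc.
  rewrite_chain (eq_sym (th_nat _ _ _)). rewrite_chain (comp_tensm _ _ _ _).
  rewrite inv_l_chain, comp_id_r, (tensm_split_l (F0 F)), <- ?comp_assoc.
  rewrite_chain (F_lunit F x). rewrite_chain (lunit_nat _). apply inv_r_chain.
Qed.

Lemma conj_F_runit x :
  comp (fmor F (runit x)) (comp (conj_F2 x I) (tensm idm (comp (th I) (F0 F))))
  = runit (fob F x).
Proof.
  unfold conj_F2. rewrite <- !comp_assoc.
  rewrite_chain (eq_sym (th_nat _ _ _)). rewrite_chain (comp_tensm _ _ _ _).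
  rewrite inv_l_chain, comp_id_r, (tensm_split_r _ (F0 F)), <- ?comp_assoc.
  rewrite_chain (F_runit F x). rewrite_chain (runit_nat _). apply inv_r_chain.
Qed.

Definition conj_hom2 : Hom2 G H :=
  {| fob := fob F; fmor := fun a b f => fmor F f;
     fmor_id := fmor_id F; fmor_comp := fmor_comp _ _ F;
     F2 := conj_F2; F2_nat := conj_F2_nat;
     F0 := comp (th I) (F0 F);
     F_assoc := conj_F_assoc; F_lunit := conj_F_lunit; F_runit := conj_F_runit |}.

Definition conj_mon_nat : MonNat F conj_hom2.
Proof.
  refine (Build_MonNat _ _ F conj_hom2 th th_nat _ eq_refl).
  intros x y; simpl. unfold conj_F2.
  rewrite <- !comp_assoc, <- tens_comp, !inv_l, tens_id, comp_id_r. reflexivity.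
Defined.

Definition conj_mon_nat_inv : MonNat conj_hom2 F.
Proof.
  refine (Build_MonNat _ _ conj_hom2 F (fun x => inv (th x)) inv_th_nat _ _);
    simpl; intros; apply inv_l_chain.
Defined.

Lemma conj_hom2_iso : iso_hom F conj_hom2.
Proof.
  exists conj_mon_nat, conj_mon_nat_inv. intros x; simpl. split; [apply inv_l | apply inv_r].
Qed.

End Conjugation.

Section UnitTwist.
Context {G H : TwoGroup}.
Variable F : Hom2 G H.

Lemma F2_nat_l {x x'} y (f : hom G x x') :
  comp (F2 F x' y) (tensm (fmor F f) idm) = comp (fmor F (tensm f idm)) (F2 F x y).
Proof. rewrite <- (fmor_id F y). apply F2_nat. Qed.

Lemma fmor_square {a b b' c} (g : hom G b c) (f : hom G a b) (g' : hom G b' c)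
  (f' : hom G a b') :
  comp g f = comp g' f' -> comp (fmor F g) (fmor F f) = comp (fmor F g') (fmor F f').
Proof. intros E. rewrite <- !fmor_comp, E. reflexivity. Qed.

Variable u : hom H I (fob F I).

Definition runit_twist x : hom H (fob F x) (fob F x) :=
  comp (fmor F (runit x)) (comp (F2 F x I) (comp (tensm idm u) (inv (runit (fob F x))))).

Lemma runit_twist_nat x y (f : hom G x y) :
  comp (runit_twist y) (fmor F f) = comp (fmor F f) (runit_twist x).
Proof.
  unfold runit_twist. rewrite <- !comp_assoc.
  rewrite_chain (inv_runit_nat _). rewrite_chain (comp_tensm _ _ _ _).
  rewrite comp_id_l, comp_id_r, (tensm_split_l (fmor F f) u), <- ?comp_assoc.
  rewrite_chain (F2_nat_l _ _). rewrite_chain (fmor_square _ _ _ _ (runit_nat _)).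
  reflexivity.
Qed.

Lemma runit_twist_unit : runit (@I H) = lunit I -> comp (runit_twist I) (F0 F) = u.
Proof.
  intros runit_lunit. unfold runit_twist. rewrite <- !comp_assoc.
  rewrite_chain (inv_runit_nat _). rewrite_chain (comp_tensm _ _ _ _).
  rewrite comp_id_l, comp_id_r.
  assert (F0_tensm_u : tensm (F0 F) u
                  = comp (tensm idm (F0 F)) (tensm (F0 F) (comp (inv (F0 F)) u))).
  { rewrite comp_tensm, comp_id_l, inv_r_chain. reflexivity. }
  rewrite F0_tensm_u, <- ?comp_assoc. rewrite_chain (F_runit F I).
  rewrite (tensm_split_l (F0 F)), <- ?comp_assoc. rewrite_chain (runit_nat _).
  rewrite runit_lunit. rewrite_chain (lunit_nat _).
  rewrite inv_r, comp_id_r. apply inv_r_chain.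
Qed.

End UnitTwist.

Lemma iso_hom_identity_unit {G H : TwoGroup} (F : Hom2 G H) (p : I = fob F I) :
  runit (@I H) = lunit I -> exists F' : Hom2 G H, is_identity (F0 F') /\ iso_hom F F'.
Proof.
  intros runit_lunit.
  exists (conj_hom2 F (runit_twist F (eq_hom p)) (runit_twist_nat F (eq_hom p))). split.
  - exists p. exact (runit_twist_unit F (eq_hom p) runit_lunit).
  - apply conj_hom2_iso.
Qed.

Lemma special_runit_lunit_unit {H : TwoGroup} : special H -> runit (@I H) = lunit I.
Proof.
  intros [_ [lunit_id [runit_id _]]].
  destruct (lunit_id I) as [p lunit_eq], (runit_id I) as [q runit_eq].
  rewrite lunit_eq, runit_eq, (proof_irrelevance _ p q). reflexivity.
Qed.

Theorem proposition8p10 (G H : TwoGroup) (sG : special G) (sH : special H)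
  (F : Hom2 G H) :
  exists F' : Hom2 G H, special_hom F' /\ iso_hom F F'.
Proof.
  pose proof sH as [skeletal _].
  destruct (iso_hom_identity_unit F (skeletal _ _ (F0 F)) (special_runit_lunit_unit sH))
    as [F' [F0_id iso]].
  exists F'. exact (conj (conj sG (conj sH F0_id)) iso).
Qed.
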